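(* Let $G$, $K$, $\hat G$, $T$, $S$, $H$ be as described in the context, and let $c:D\to\{0,1\}$ be a stable partial coloring of $\hat G$, witnessed by $H_c$ and $X_c$. Let $D'\supseteq D$ with $D'\setminus D\subseteq H$, and let $c':D'\to\{0,1\}$ be an extension of $c$. Then there is a map $\tilde c:D'\to\{0,1\}$ such that: (i) $\tilde c$, as a coloring of $\hat G[D']$, is strongly maximal in $\lfloor X_c\rfloor$; (ii) $\{x\in D':\tilde c(x)\neq c'(x)\}\subseteq\lfloor X_c\rfloor$; (iii) for every $v\in X_c$, the set $\{x\in\lfloor v\rfloor:\tilde c(x)\neq c'(x)\}$ is a finite set of vertices of finite degree; and (iv) for every $v\in X_c$ such that no vertex of $D'\setminus D$ has a neighbor in $\lfloor v\rfloor$, we have $\tilde c|_{\lfloor v\rfloor}=c|_{\lfloor v\rfloor}$.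
   Context: Setting: $G$ is a countable connected graph with no alternating ray (a ray is alternating if it passes through infinitely many vertices of finite degree and infinitely many of infinite degree); $K$ is a finite graph disjoint from $G$; $\hat G$ is obtained from the disjoint union of $G$ and $K$ by adding arbitrary edges between $V(G)$ and $V(K)$. $T$ is a normal spanning tree of $G$ with root $r$ and tree order $\le$ ($u\le v$ iff $u$ lies on the root–$v$ path of $T$; normal means endpoints of every edge of $G$ are comparable). $\lfloor v\rfloor=\{u:u\ge v\}$, $\lfloor X\rfloor=\bigcup_{v\in X}\lfloor v\rfloor$; an antichain is a set of pairwise $\le$-incomparable vertices. $S$ is the set of $\le$-minimal vertices of finite degree of $G$, and $H=V(G)\setminus\lfloor S\rfloor$. For a coloring $c$ of a graph $\Gamma$: $\mathit{trans}(c)=\{uv\in E(\Gamma):c(u)\neq c(v)\}$; $c*F$ differs from $c$ exactly on $F$; for finite $F$ of vertices of finite degree, $\mathit{dtrans}(c,F)=|\mathit{trans}(c)\setminus\mathit{trans}(c*F)|-|\mathit{trans}(c*F)\setminus\mathit{trans}(c)|$; $c$ is strongly maximal in $A$ if $\mathit{dtrans}(c,F)\ge0$ for all finite $F\subseteq A$ of vertices of finite degree. A partial coloring $c:D\to\{0,1\}$ with $V(K)\subseteq D\subseteq V(\hat G)$ is stable if there are $H_c\subseteq H$ and an antichain $X_c\subseteq H\cup S$ such that: (S1) $D\setminus V(K)$ is the disjoint union of $H_c$ and $\lfloor X_c\rfloor$; (S2) $c$, as a coloring of $\hat G[D]$, is strongly maximal in $\lfloor X_c\rfloor$; (S3) for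 every $w\in V(\hat G)\setminus D$ and every $v\in X_c$, the set $N(w)\cap\lfloor v\rfloor$ is finite. *)

From Stdlib Require Import List Arith.
Import ListNotations.
Set Implicit Arguments.

Section Defs.
Variable V : Type.

Definition card_is (A : Type) (P : A -> Prop) (n : nat) : Prop :=
  exists l : list A, NoDup l /\ (forall x, In x l <-> P x) /\ length l = n.

(* A (symmetric, irreflexive) edge relation E has exactly n (undirected) edges:
   the set of ordered pairs (u,v) with E u v has exactly 2n elements. *)
Definition edge_count (E : V -> V -> Prop) (n : nat) : Prop :=
  card_is (fun p : V * V => E (fst p) (snd p)) (2 * n).

Definition finite_set (P : V -> Prop) : Prop :=
  exists l : list V, forall x, P x -> In x l.

Variable adj : V -> V -> Prop.   (* adjacency of \hat G *)
Variable inK : V -> Prop.        (* vertices of K; V(G) is the complement *)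

Definition inG (v : V) : Prop := ~ inK v.

Definition fin_deg (v : V) : Prop := finite_set (fun u => inG u /\ adj v u).

Definition fin_deg_in (D : V -> Prop) (v : V) : Prop :=
  finite_set (fun u => D u /\ adj v u).

Inductive reachG (u : V) : V -> Prop :=
| reachG_refl : inG u -> reachG u u
| reachG_step : forall v w, reachG u v -> adj v w -> inG w -> reachG u w.

Definition connectedG : Prop := forall u v, inG u -> inG v -> reachG u v.

Definition countable : Prop := exists f : V -> nat, forall x y, f x = f y -> x = y.

Definition is_ray (f : nat -> V) : Prop :=
  (forall n m, f n = f m -> n = m) /\ (forall n, inG (f n)) /\
  (forall n, adj (f n) (f (S n))).

Definition inf_often (P : nat -> Prop) : Prop := forall N, exists n, N <= n /\ P n.

Definition alternating_ray (f : nat -> V) : Prop :=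
  is_ray f /\ inf_often (fun n => fin_deg (f n)) /\
  inf_often (fun n => ~ fin_deg (f n)).

(* Rooted spanning tree T of G with root r, encoded by its parent map par:
   the tree edges are {v, par v} for v <> r in G. *)
Variable par : V -> V.
Variable r : V.

Definition rooted_spanning_tree : Prop :=
  inG r /\ par r = r /\
  (forall v, inG v -> inG (par v)) /\
  (forall v, inG v -> v <> r -> adj v (par v)) /\
  (forall v, inG v -> exists k, Nat.iter k par v = r).

Definition tle (u v : V) : Prop := inG v /\ exists k, Nat.iter k par v = u.

Definition normal_tree : Prop :=
  forall u v, inG u -> inG v -> adj u v -> tle u v \/ tle v u.

Definition up1 (v : V) : V -> Prop := fun u => tle v u.
Definition up (X : V -> Prop) : V -> Prop := fun u => exists x, X x /\ tle x u.

Definition antichain (X : V -> Prop) : Prop :=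
  forall x y, X x -> X y -> tle x y -> x = y.

Definition Sset (v : V) : Prop :=
  inG v /\ fin_deg v /\ forall u, inG u -> fin_deg u -> tle u v -> u = v.

Definition Hset (v : V) : Prop := inG v /\ ~ up Sset v.

(* Colorings: a partial coloring with domain D is a total map V -> bool of which
   only the values on D matter; it is a coloring of \hat G[D].
   c is strongly maximal in A: for every finite F subset of A consisting of
   vertices of finite degree (in \hat G[D]), with c*F = d the coloring differing
   from c exactly on F, dtrans(c,F) = |trans c \ trans d| - |trans d \ trans c| >= 0. *)
Definition strongly_max (D : V -> Prop) (c : V -> bool) (A : V -> Prop) : Prop :=
  forall F : list V,
    (forall x, In x F -> A x /\ D x /\ fin_deg_in D x) ->
    forall d : V -> bool, (forall x, D x -> (d x <> c x <-> In x F)) ->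
    forall n m : nat,
      edge_count (fun u v => D u /\ D v /\ adj u v /\ c u <> c v /\ d u = d v) n ->
      edge_count (fun u v => D u /\ D v /\ adj u v /\ d u <> d v /\ c u = c v) m ->
      m <= n.

Definition stable_wit (D : V -> Prop) (c : V -> bool) (Hc Xc : V -> Prop) : Prop :=
  (forall v, inK v -> D v) /\
  (forall v, Hc v -> Hset v) /\
  (forall v, Xc v -> Hset v \/ Sset v) /\ antichain Xc /\
  (* (S1) *)
  (forall v, (D v /\ ~ inK v) <-> (Hc v \/ up Xc v)) /\
  (forall v, ~ (Hc v /\ up Xc v)) /\
  (* (S2) *)
  strongly_max D c (up Xc) /\
  (* (S3) *)
  (forall w v, ~ D w -> Xc v -> finite_set (fun u => adj w u /\ up1 v u)).

End Defs.

(* For each v in X_c, among the recolourings of c' that change only finitely many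
   finite-degree vertices of the cone ⌊v⌋, choose one with maximal gain in transitions.
   The gain is bounded: strong maximality of c on ⌊X_c⌋ leaves only the edges between ⌊v⌋
   and D' \ D as a source of gain, and these are finitely many, because by normality
   their new endpoints are ancestors of v, and (S3) applies.  If there are no such edges,
   c' itself is optimal.  Gluing the optimal recolourings of the disjoint cones gives the
   colouring.  By normality no edge leads from a cone to another vertex of ⌊X_c⌋, so a
   finite change inside ⌊X_c⌋ splits into changes inside single cones, and inside one cone
   a change with positive gain would contradict the optimality of the choice. *)

From Stdlib Require Import List ZArith Lia Classical ClassicalEpsilon Permutation.
Set Implicit Arguments.

Definition holds (P : Prop) : bool :=
  if excluded_middle_informative P then true else false.

Lemma holdsP (P : Prop) : reflect P (holds P).
Proof. unfold holds; destruct (excluded_middle_informative P); constructor; assumption. Qed.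

Lemma holds_true (P : Prop) : P -> holds P = true.
Proof. intros HP. destruct (holdsP P); [reflexivity|contradiction]. Qed.

Lemma holds_false (P : Prop) : ~ P -> holds P = false.
Proof. intros HP. destruct (holdsP P); [contradiction|reflexivity]. Qed.

Definition patch {A : Type} (U : A -> Prop) (a b : A -> bool) (x : A) : bool :=
  if holds (U x) then a x else b x.

Lemma patch_in {A : Type} (U : A -> Prop) a b x : U x -> patch U a b x = a x.
Proof. intros Hx. unfold patch. rewrite holds_true by exact Hx. reflexivity. Qed.

Lemma patch_out {A : Type} (U : A -> Prop) a b x : ~ U x -> patch U a b x = b x.
Proof. intros Hx. unfold patch. rewrite holds_false by exact Hx. reflexivity. Qed.

Lemma patch_changed {A : Type} (U : A -> Prop) d a x :
  patch U d a x <> a x -> U x /\ d x <> a x.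
Proof.
  unfold patch. destruct (holdsP (U x)) as [Hx|Hx]; [auto|intros E; contradiction E; reflexivity].
Qed.

Lemma patch_co_changed {A : Type} (U : A -> Prop) d a x :
  patch U a d x <> a x -> ~ U x /\ d x <> a x.
Proof.
  unfold patch. destruct (holdsP (U x)) as [Hx|Hx]; [intros E; contradiction E; reflexivity|auto].
Qed.

Definition ind (P : Prop) : Z := if holds P then 1%Z else 0%Z.

Lemma ind_true (P : Prop) : P -> ind P = 1%Z.
Proof. intros HP. unfold ind. rewrite holds_true by exact HP. reflexivity. Qed.

Lemma ind_false (P : Prop) : ~ P -> ind P = 0%Z.
Proof. intros HP. unfold ind. rewrite holds_false by exact HP. reflexivity. Qed.

Lemma ind_bounds (P : Prop) : (0 <= ind P <= 1)%Z.
Proof. unfold ind; destruct (holds P); lia. Qed.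

Definition swap_pair {A : Type} (p : A * A) : A * A := (snd p, fst p).

Lemma swap_pair_involutive {A : Type} (p : A * A) : swap_pair (swap_pair p) = p.
Proof. destruct p; reflexivity. Qed.

Section FiniteSets.
Variable A : Type.

Lemma finite_set_enum (P : A -> Prop) :
  finite_set P -> exists l, NoDup l /\ forall x, In x l <-> P x.
Proof.
  intros [l Hl]. revert P Hl. induction l as [|a l IH]; intros P Hl.
  - exists nil. split; [constructor|]. intros x; split; [intros []|intros Hx; exact (Hl x Hx)].
  - destruct (IH (fun x => P x /\ x <> a)) as [l' [Hnd Hl']].
    { intros x [Hx Hne]. destruct (Hl x Hx); [congruence|assumption]. }
    destruct (classic (P a)) as [Ha|Ha].
    + exists (a :: l'). split.
      * constructor; [|assumption]. intros Hin. apply Hl' in Hin. tauto.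
      * intros x; split.
        -- intros [<-|Hin]; [assumption|]. apply Hl' in Hin; tauto.
        -- intros Hx. destruct (classic (x = a)) as [->|Hne]; [left; reflexivity|].
           right. apply Hl'. tauto.
    + exists l'. split; [assumption|]. intros x; split.
      * intros Hin; apply Hl' in Hin; tauto.
      * intros Hx. apply Hl'. split; [assumption|]. intros ->. contradiction.
Qed.

Lemma finite_set_weaken (P Q : A -> Prop) :
  (forall x, P x -> Q x) -> finite_set Q -> finite_set P.
Proof. intros HPQ [l Hl]. exists l. auto. Qed.

Lemma finite_set_or (P Q : A -> Prop) :
  finite_set P -> finite_set Q -> finite_set (fun x => P x \/ Q x).
Proof. intros [l Hl] [m Hm]. exists (l ++ m). intros x [H|H]; apply in_or_app; auto. Qed.

Lemma finite_set_swap (P : A * A -> Prop) :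
  finite_set P -> finite_set (fun p => P (swap_pair p)).
Proof.
  intros [l Hl]. exists (map swap_pair l). intros [x y] H. apply Hl in H.
  change (x, y) with (swap_pair (y, x)). apply in_map, H.
Qed.

Lemma finite_set_pairs {B : Type} (Q : A -> Prop) (R : A -> B -> Prop) :
  finite_set Q -> (forall a, Q a -> finite_set (R a)) ->
  finite_set (fun p : A * B => Q (fst p) /\ R (fst p) (snd p)).
Proof.
  intros [l Hl] HR.
  assert (Hpairs : forall l : list A, exists m, forall p : A * B,
             In (fst p) l -> Q (fst p) -> R (fst p) (snd p) -> In p m).
  { induction l0 as [|a l0 [m Hm]].
    - exists nil. intros p [].
    - destruct (classic (Q a)) as [Ha|Ha].
      + destruct (HR a Ha) as [la Hla]. exists (map (pair a) la ++ m).
        intros [x y] Hin HQ HRp; simpl in *. apply in_or_app.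
        destruct Hin as [<-|Hin]; [left; apply in_map, Hla, HRp|right; apply Hm; auto].
      + exists m. intros [x y] Hin HQ HRp; simpl in *.
        destruct Hin as [<-|Hin]; [contradiction|apply Hm; auto]. }
  destruct (Hpairs l) as [m Hm]. exists m. intros p [HQ HRp]. apply Hm; auto.
Qed.

Lemma card_is_unique (P : A -> Prop) n m : card_is P n -> card_is P m -> n = m.
Proof.
  intros [l [Nl [Hl <-]]] [k [Nk [Hk <-]]].
  apply Nat.le_antisymm; apply NoDup_incl_length; auto; intros x Hx.
  - apply Hk, Hl, Hx.
  - apply Hl, Hk, Hx.
Qed.

Lemma card_is_filter (P : A -> Prop) l :
  NoDup l -> (forall x, P x -> In x l) -> card_is P (length (filter (fun x => holds (P x)) l)).
Proof.
  intros Nl Hl. exists (filter (fun x => holds (P x)) l).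
  split; [apply NoDup_filter, Nl|split; [|reflexivity]].
  intros x. rewrite filter_In. destruct (holdsP (P x)) as [HP|HP].
  - split; [intros _; exact HP|intros _; split; auto].
  - split; [intros [_ E]; discriminate E|intros H; contradiction].
Qed.

Lemma card_is_symmetric_even (P : A * A -> Prop) k :
  (forall p, P p -> P (swap_pair p)) -> (forall u, ~ P (u, u)) ->
  card_is P k -> exists n, k = 2 * n.
Proof.
  intros Hsym Hirr. revert P Hsym Hirr.
  induction k as [k IH] using lt_wf_ind. intros P Hsym Hirr [l [Nl [Hl Hlen]]].
  destruct l as [|p l].
  - exists 0. simpl in Hlen. lia.
  - assert (Pp : P p) by (apply Hl; left; reflexivity).
    assert (Hne : swap_pair p <> p).
    { destruct p as [u v]; unfold swap_pair; simpl. intros E. injection E as ->.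
      exact (Hirr u Pp). }
    assert (Hin : In (swap_pair p) l).
    { destruct (proj2 (Hl (swap_pair p)) (Hsym p Pp)); [congruence|assumption]. }
    apply in_split in Hin. destruct Hin as [la [lb ->]].
    apply NoDup_cons_iff in Nl. destruct Nl as [Np Nl].
    set (P' := fun x => P x /\ x <> p /\ x <> swap_pair p).
    destruct (IH (length (la ++ lb))) with (P := P') as [n Hn].
    + rewrite <- Hlen. simpl. rewrite !length_app. simpl. lia.
    + intros q [Hq [H1 H2]]. split; [auto|split].
      * intros E. apply H2. rewrite <- E, swap_pair_involutive. reflexivity.
      * intros E. apply H1. rewrite <- (swap_pair_involutive q), E. apply swap_pair_involutive.
    + intros u [Hu _]. exact (Hirr u Hu).
    + exists (la ++ lb). split; [|split; [|reflexivity]].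
      { eapply NoDup_remove_1; eauto. }
      intros x. unfold P'. split.
      * intros Hx. assert (Hx' : In x (p :: la ++ swap_pair p :: lb)).
        { right. apply in_app_or in Hx. apply in_or_app. simpl. tauto. }
        apply Hl in Hx'. split; [assumption|split].
        -- intros ->. apply Np. apply in_app_or in Hx. apply in_or_app. simpl. tauto.
        -- intros ->. exact (NoDup_remove_2 _ _ _ Nl Hx).
      * intros [Hx [H1 H2]]. apply Hl in Hx. destruct Hx as [E|Hx]; [congruence|].
        apply in_app_or in Hx. apply in_or_app. simpl in Hx.
        destruct Hx as [|[|]]; auto; congruence.
    + exists (S n). rewrite <- Hlen. simpl. rewrite length_app in *. simpl. lia.
Qed.

End FiniteSets.

Section ZSums.
Variable A : Type.

Fixpoint zsum (l : list A) (f : A -> Z) : Z :=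
  match l with nil => 0%Z | x :: l => (f x + zsum l f)%Z end.

Lemma zsum_ext (l : list A) f g : (forall x, In x l -> f x = g x) -> zsum l f = zsum l g.
Proof. induction l as [|a l IH]; simpl; intros H; [reflexivity|]. rewrite H, IH; auto. Qed.

Lemma zsum_add (l : list A) f g : zsum l (fun x => f x + g x)%Z = (zsum l f + zsum l g)%Z.
Proof. induction l; simpl; lia. Qed.

Lemma zsum_sub (l : list A) f g : zsum l (fun x => f x - g x)%Z = (zsum l f - zsum l g)%Z.
Proof. induction l; simpl; lia. Qed.

Lemma zsum_le (l : list A) f g : (forall x, In x l -> f x <= g x)%Z -> (zsum l f <= zsum l g)%Z.
Proof.
  induction l as [|a l IH]; simpl; intros H; [lia|].
  specialize (IH (fun x Hx => H x (or_intror Hx))). specialize (H a (or_introl eq_refl)). lia.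
Qed.

Lemma zsum_zero (l : list A) f : (forall x, In x l -> f x = 0%Z) -> zsum l f = 0%Z.
Proof. induction l as [|a l IH]; simpl; intros H; [reflexivity|]. rewrite H, IH; auto. Qed.

Lemma zsum_Permutation (l l' : list A) f : Permutation l l' -> zsum l f = zsum l' f.
Proof. induction 1; simpl; lia. Qed.

Lemma zsum_filter (l : list A) f (q : A -> bool) :
  (forall x, In x l -> q x = false -> f x = 0%Z) -> zsum l f = zsum (filter q l) f.
Proof.
  induction l as [|a l IH]; simpl; intros H; [reflexivity|].
  rewrite IH by auto. destruct (q a) eqn:E; simpl; [reflexivity|].
  rewrite (H a (or_introl eq_refl) E). lia.
Qed.

Lemma zsum_support (l1 l2 : list A) f : NoDup l1 -> NoDup l2 ->
  (forall x, f x <> 0%Z -> In x l1 /\ In x l2) -> zsum l1 f = zsum l2 f.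
Proof.
  intros N1 N2 H. set (q := fun x => negb (Z.eqb (f x) 0)).
  assert (Hq : forall x, q x = false -> f x = 0%Z).
  { intros x. unfold q. destruct (Z.eqb_spec (f x) 0); simpl; [auto|discriminate]. }
  rewrite (zsum_filter l1 f q), (zsum_filter l2 f q) by auto.
  apply zsum_Permutation, NoDup_Permutation; try apply NoDup_filter; auto.
  intros x. rewrite !filter_In. unfold q. destruct (Z.eqb_spec (f x) 0); simpl.
  - split; intros [_ E]; discriminate E.
  - specialize (H x n). tauto.
Qed.

Lemma zsum_ind (l : list A) (P : A -> Prop) :
  zsum l (fun x => ind (P x)) = Z.of_nat (length (filter (fun x => holds (P x)) l)).
Proof.
  induction l as [|a l IH]; simpl; [reflexivity|].
  rewrite IH. unfold ind. destruct (holds (P a)); simpl length; lia.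
Qed.

Lemma zsum_ind_le (l m : list A) (P : A -> Prop) :
  NoDup l -> (forall x, P x -> In x m) -> (zsum l (fun x => ind (P x)) <= Z.of_nat (length m))%Z.
Proof.
  intros Nl Hm. rewrite zsum_ind. apply Nat2Z.inj_le, NoDup_incl_length.
  - apply NoDup_filter, Nl.
  - intros x Hx. apply filter_In in Hx. destruct Hx as [_ Hx].
    apply Hm. destruct (holdsP (P x)); [assumption|discriminate].
Qed.

Lemma Z_bounded_attains_max (S : A -> Prop) (g : A -> Z) (M : Z) (a0 : A) :
  S a0 -> (forall a, S a -> (g a <= M)%Z) ->
  exists am, S am /\ forall a, S a -> (g a <= g am)%Z.
Proof.
  intros H0 HM.
  assert (Hclimb : forall n : nat, forall a, S a -> (M - g a <= Z.of_nat n)%Z ->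
     exists am, S am /\ forall a, S a -> (g a <= g am)%Z).
  { induction n as [|n IH]; intros a Ha Hle.
    - exists a. split; [assumption|]. intros a' Ha'. specialize (HM a' Ha'). lia.
    - destruct (classic (forall a', S a' -> (g a' <= g a)%Z)) as [Hall|Hn].
      + exists a; auto.
      + apply not_all_ex_not in Hn. destruct Hn as [a' Ha'].
        apply imply_to_and in Ha'. destruct Ha' as [Sa' Hlt].
        apply (IH a' Sa'). lia. }
  apply (Hclimb (Z.to_nat (M - g a0)) a0 H0). lia.
Qed.

End ZSums.

Section TransitionGain.
Variables (V : Type) (adj : V -> V -> Prop).
Hypothesis adj_sym : forall u v, adj u v -> adj v u.
Hypothesis adj_irr : forall v, ~ adj v v.

Definition dom_edge (Dom : V -> Prop) (p : V * V) : Prop :=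
  Dom (fst p) /\ Dom (snd p) /\ adj (fst p) (snd p).

Definition trans_ind (x y : bool) : Z := if Bool.eqb x y then 0%Z else 1%Z.

Lemma trans_ind_bounds x y : (0 <= trans_ind x y <= 1)%Z.
Proof. unfold trans_ind. destruct (Bool.eqb x y); lia. Qed.

(* Edges are counted as ordered pairs: if [L] lists every edge of [Dom] at which [a] and
   [d] differ and [F] is the set of vertices where they differ, then
   [gain Dom a d L = - 2 * dtrans(a, F)]. *)
Definition trans_gain (Dom : V -> Prop) (a b : V -> bool) (p : V * V) : Z :=
  if holds (dom_edge Dom p)
  then (trans_ind (b (fst p)) (b (snd p)) - trans_ind (a (fst p)) (a (snd p)))%Z
  else 0%Z.

Definition gain (Dom : V -> Prop) (a b : V -> bool) (L : list (V * V)) : Z :=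
  zsum L (trans_gain Dom a b).

Definition covers (Dom : V -> Prop) (a b : V -> bool) (L : list (V * V)) : Prop :=
  NoDup L /\ forall p, dom_edge Dom p ->
    (a (fst p) <> b (fst p) \/ a (snd p) <> b (snd p)) -> In p L.

Definition covers_around (Dom : V -> Prop) (X : list V) (L : list (V * V)) : Prop :=
  NoDup L /\ forall p, dom_edge Dom p -> (In (fst p) X \/ In (snd p) X) -> In p L.

Definition changes_within (Dom A : V -> Prop) (a d : V -> bool) (F : list V) : Prop :=
  (forall x, In x F -> A x /\ Dom x /\ fin_deg_in adj Dom x) /\
  (forall x, Dom x -> d x <> a x -> In x F).

Definition trans_lost (Dom : V -> Prop) (a d : V -> bool) (p : V * V) : Prop :=
  Dom (fst p) /\ Dom (snd p) /\ adj (fst p) (snd p) /\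
  a (fst p) <> a (snd p) /\ d (fst p) = d (snd p).

Lemma trans_gain_trans Dom a b c p :
  trans_gain Dom a c p = (trans_gain Dom a b p + trans_gain Dom b c p)%Z.
Proof. unfold trans_gain. destruct (holds _); lia. Qed.

Lemma gain_trans Dom a b c L : gain Dom a c L = (gain Dom a b L + gain Dom b c L)%Z.
Proof. unfold gain. rewrite <- zsum_add. apply zsum_ext. intros p _. apply trans_gain_trans. Qed.

Lemma trans_gain_nonzero Dom a b p : trans_gain Dom a b p <> 0%Z ->
  dom_edge Dom p /\ (a (fst p) <> b (fst p) \/ a (snd p) <> b (snd p)).
Proof.
  unfold trans_gain. destruct (holdsP (dom_edge Dom p)) as [E|E]; [|congruence].
  intros H. split; [exact E|].
  destruct (classic (a (fst p) = b (fst p))) as [E1|E1]; [|left; exact E1].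
  destruct (classic (a (snd p) = b (snd p))) as [E2|E2]; [|right; exact E2].
  rewrite E1, E2 in H. lia.
Qed.

Lemma gain_same Dom a b L : (forall x, Dom x -> b x = a x) -> gain Dom a b L = 0%Z.
Proof.
  intros Hab. apply zsum_zero. intros p _.
  destruct (Z.eq_dec (trans_gain Dom a b p) 0) as [|Hn]; [assumption|].
  apply trans_gain_nonzero in Hn. destruct Hn as [[H1 [H2 _]] [E|E]];
    exfalso; apply E; symmetry; auto.
Qed.

Lemma gain_cover_independent Dom a b L1 L2 :
  covers Dom a b L1 -> covers Dom a b L2 -> gain Dom a b L1 = gain Dom a b L2.
Proof.
  intros [N1 H1] [N2 H2]. apply zsum_support; auto.
  intros p Hp. apply trans_gain_nonzero in Hp. destruct Hp. auto.
Qed.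

Lemma covers_weaken Dom a b a' b' L : covers Dom a b L ->
  (forall x, Dom x -> a' x <> b' x -> a x <> b x) -> covers Dom a' b' L.
Proof.
  intros [N HL] Hab. split; [exact N|].
  intros p [H1 [H2 H3]] E. apply HL; [split; auto|]. destruct E; [left|right]; auto.
Qed.

Lemma covers_sym Dom a b L : covers Dom a b L -> covers Dom b a L.
Proof. intros HL. eapply covers_weaken; [exact HL|]. auto. Qed.

Lemma covers_around_exists Dom X : (forall x, In x X -> Dom x -> fin_deg_in adj Dom x) ->
  exists L, covers_around Dom X L.
Proof.
  intros HX.
  assert (Hout : finite_set (fun p : V * V =>
                   (In (fst p) X /\ Dom (fst p)) /\ (Dom (snd p) /\ adj (fst p) (snd p)))).
  { apply (finite_set_pairs (Q := fun x => In x X /\ Dom x) (fun x u => Dom u /\ adj x u)).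
    - exists X. intros x [Hx _]. exact Hx.
    - intros x [Hx Hd]. apply HX; assumption. }
  assert (Hboth : finite_set (fun p : V * V =>
                    dom_edge Dom p /\ (In (fst p) X \/ In (snd p) X))).
  { eapply finite_set_weaken; [|apply finite_set_or; [exact Hout|apply finite_set_swap, Hout]].
    intros [x y] [[Hx [Hy Ha]] [I|I]]; simpl in *; [left|right]; simpl; auto. }
  destruct (finite_set_enum Hboth) as [L [N HL]].
  exists L. split; [exact N|]. intros p Hp HI. apply HL; auto.
Qed.

Lemma covers_around_covers Dom X L a b : covers_around Dom X L ->
  (forall x, Dom x -> a x <> b x -> In x X) -> covers Dom a b L.
Proof.
  intros [N HL] HX. split; [exact N|].
  intros p Hp E. apply HL; [exact Hp|]. destruct Hp as [Hx [Hy _]].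
  destruct E; [left|right]; apply HX; assumption.
Qed.

Lemma trans_gain_lost Dom a d p :
  trans_gain Dom a d p = (ind (trans_lost Dom d a p) - ind (trans_lost Dom a d p))%Z.
Proof.
  unfold trans_gain, ind, trans_lost, dom_edge.
  repeat match goal with |- context [holds ?P] => destruct (holdsP P) end;
  destruct (a (fst p)), (a (snd p)), (d (fst p)), (d (snd p)); simpl;
  try reflexivity; exfalso; intuition congruence.
Qed.

Lemma gain_lost Dom a d L : gain Dom a d L =
  (Z.of_nat (length (filter (fun p => holds (trans_lost Dom d a p)) L)) -
   Z.of_nat (length (filter (fun p => holds (trans_lost Dom a d p)) L)))%Z.
Proof.
  unfold gain. rewrite (zsum_ext _ _ _ (fun p _ => trans_gain_lost Dom a d p)), zsum_sub, !zsum_ind.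
  reflexivity.
Qed.

Lemma trans_lost_covered Dom a d L p : covers Dom a d L -> trans_lost Dom a d p -> In p L.
Proof.
  intros [_ HL] [H1 [H2 [H3 [H4 H5]]]]. apply HL; [split; auto|].
  destruct (classic (a (fst p) = d (fst p))) as [E|E]; [right|left; exact E].
  intros E'. apply H4. congruence.
Qed.

Lemma trans_lost_card_even Dom a d k : card_is (trans_lost Dom a d) k -> exists n, k = 2 * n.
Proof.
  apply card_is_symmetric_even.
  - intros [y z] [Hy [Hz [Hyz [Ha Hd]]]]. repeat split; simpl; auto.
  - intros u [_ [_ [Hu _]]]. exact (adj_irr Hu).
Qed.

(* [F] may list more vertices than those at which [d] changes [a]: strong maximality
   is tested on the exact change set [filter (d x <> a x) F]. *)
Lemma strongly_max_iff_gain Dom a A : strongly_max adj Dom a A <->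
  forall d F L, changes_within Dom A a d F -> covers Dom a d L -> (gain Dom a d L <= 0)%Z.
Proof.
  split.
  - intros HS d F L [HF Hd] HL.
    set (Fd := filter (fun x => holds (d x <> a x)) F).
    pose proof (card_is_filter (trans_lost Dom a d) (proj1 HL)
                  (fun p Hp => trans_lost_covered HL Hp)) as Hlost.
    pose proof (card_is_filter (trans_lost Dom d a) (proj1 HL)
                  (fun p Hp => trans_lost_covered (covers_sym HL) Hp)) as Hwon.
    destruct (trans_lost_card_even Hlost) as [n Hn]. rewrite Hn in Hlost.
    destruct (trans_lost_card_even Hwon) as [m Hm]. rewrite Hm in Hwon.
    assert (Hmn : m <= n).
    { apply (HS Fd) with (d := d); [| |exact Hlost|exact Hwon].
      - intros x Hx. apply filter_In in Hx. apply HF, Hx.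
      - intros x Hx. unfold Fd. rewrite filter_In.
        destruct (holdsP (d x <> a x)) as [E|E].
        + split; [intros _; split; [apply Hd|]; auto|intros _; exact E].
        + split; [intros E'; contradiction|intros [_ Hf]; discriminate Hf]. }
    rewrite gain_lost, Hn, Hm. lia.
  - intros H F HF d Hd n m Hn Hm.
    destruct (covers_around_exists (Dom := Dom) F) as [L HL].
    { intros x Hx _. apply HF, Hx. }
    assert (HLc : covers Dom a d L).
    { apply (covers_around_covers a d HL). intros x Hx E. apply (Hd x Hx). congruence. }
    specialize (H d F L (conj HF (fun x Hx E => proj1 (Hd x Hx) E)) HLc).
    rewrite gain_lost in H.
    pose proof (card_is_unique Hn
                  (card_is_filter _ (proj1 HLc) (fun p Hp => trans_lost_covered HLc Hp))).
    pose proof (card_is_unique Hm (card_is_filter _ (proj1 HLc)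
                  (fun p Hp => trans_lost_covered (covers_sym HLc) Hp))).
    lia.
Qed.

Lemma trans_gain_transfer Dom (U : V -> Prop) a b a' b' p :
  (forall x, Dom x -> U x -> a x = a' x /\ b x = b' x) ->
  (forall x, Dom x -> ~ U x -> a x = b x /\ a' x = b' x) ->
  (forall y z, Dom y -> Dom z -> adj y z -> U y -> ~ U z -> a y = b y \/ a z = a' z) ->
  trans_gain Dom a b p = trans_gain Dom a' b' p.
Proof.
  intros Hin Hout Hbd. destruct p as [y z]. unfold trans_gain, dom_edge, trans_ind; simpl.
  destruct (holdsP (Dom y /\ Dom z /\ adj y z)) as [[Hy [Hz Hyz]]|_]; [|reflexivity].
  destruct (classic (U y)) as [Uy|Uy], (classic (U z)) as [Uz|Uz].
  - destruct (Hin y Hy Uy) as [-> ->], (Hin z Hz Uz) as [-> ->]. reflexivity.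
  - destruct (Hin y Hy Uy), (Hout z Hz Uz), (Hbd y z Hy Hz Hyz Uy Uz);
      destruct (a y), (b y), (a' y), (b' y), (a z), (b z), (a' z), (b' z);
      simpl; congruence.
  - destruct (Hout y Hy Uy), (Hin z Hz Uz), (Hbd z y Hz Hy (adj_sym Hyz) Uz Uy);
      destruct (a y), (b y), (a' y), (b' y), (a z), (b z), (a' z), (b' z);
      simpl; congruence.
  - destruct (Hout y Hy Uy) as [-> ->], (Hout z Hz Uz) as [-> ->]. lia.
Qed.

End TransitionGain.

Section TreeOrder.
Variables (V : Type) (adj : V -> V -> Prop) (inK : V -> Prop) (par : V -> V) (r : V).
Hypothesis T_tree : rooted_spanning_tree adj inK par r.

Local Notation tle := (tle inK par).

Lemma iter_par_inG k x : inG inK x -> inG inK (Nat.iter k par x).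
Proof. destruct T_tree as [_ [_ [Hpar _]]]. induction k; simpl; auto. Qed.

Lemma iter_par_root k : Nat.iter k par r = r.
Proof. destruct T_tree as [_ [Hr _]]. induction k as [|k IH]; simpl; [|rewrite IH]; auto. Qed.

Lemma tle_inG_l a x : tle a x -> inG inK a.
Proof. intros [Hx [k <-]]. apply iter_par_inG, Hx. Qed.

Lemma tle_inG_r a x : tle a x -> inG inK x.
Proof. intros [Hx _]. exact Hx. Qed.

Lemma tle_trans a b x : tle a b -> tle b x -> tle a x.
Proof.
  intros [_ [k Hk]] [Hx [j Hj]]. split; [exact Hx|].
  exists (k + j). rewrite Nat.iter_add, Hj. exact Hk.
Qed.

Lemma tle_down_total a b x : tle a x -> tle b x -> tle a b \/ tle b a.
Proof.
  intros Ha Hb. pose proof (tle_inG_l Ha) as Ga. pose proof (tle_inG_l Hb) as Gb.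
  destruct Ha as [Hx [j Hj]], Hb as [_ [k Hk]].
  destruct (Nat.le_gt_cases j k).
  - right. split; [exact Ga|]. exists (k - j).
    rewrite <- Hj, <- Nat.iter_add, <- Hk. f_equal. lia.
  - left. split; [exact Gb|]. exists (j - k).
    rewrite <- Hk, <- Nat.iter_add, <- Hj. f_equal. lia.
Qed.

Lemma ancestors_finite v : inG inK v -> finite_set (fun u => tle u v).
Proof.
  intros Hv. destruct T_tree as [_ [_ [_ [_ Hdepth]]]]. destruct (Hdepth v Hv) as [n Hn].
  exists (map (fun k => Nat.iter k par v) (seq 0 (S n))).
  intros u [_ [k <-]]. apply in_map_iff.
  destruct (Nat.le_gt_cases k n).
  - exists k. split; [reflexivity|]. apply in_seq. lia.
  - exists n. split; [|apply in_seq; lia].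
    replace k with ((k - n) + n) by lia. rewrite Nat.iter_add, Hn, iter_par_root. reflexivity.
Qed.

End TreeOrder.

Section GluedColoring.
Variables (V : Type) (adj : V -> V -> Prop) (inK : V -> Prop) (par : V -> V) (r : V).
Hypothesis adj_sym : forall u v, adj u v -> adj v u.
Hypothesis adj_irr : forall v, ~ adj v v.
Hypothesis T_tree : rooted_spanning_tree adj inK par r.
Hypothesis T_normal : normal_tree adj inK par.
Variables (D : V -> Prop) (c : V -> bool) (Hc Xc : V -> Prop).
Hypothesis c_stable : stable_wit adj inK par D c Hc Xc.
Variables (D' : V -> Prop) (c' : V -> bool).
Hypothesis D_sub_D' : forall x, D x -> D' x.
Hypothesis D'_new_in_H : forall x, D' x -> ~ D x -> Hset adj inK par x.
Hypothesis c'_extends_c : forall x, D x -> c' x = c x.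

Local Notation tle := (tle inK par).
Local Notation cone := (up1 inK par).
Local Notation upX := (up inK par Xc).

Lemma Xc_inG v : Xc v -> inG inK v.
Proof.
  destruct c_stable as [_ [_ [HX _]]]. intros Hv.
  destruct (HX v Hv) as [[Hg _]|[Hg _]]; exact Hg.
Qed.

Lemma upX_in_D x : upX x -> D x.
Proof. destruct c_stable as [_ [_ [_ [_ [HS1 _]]]]]. intros Hx. apply (HS1 x). right. exact Hx. Qed.

Lemma Xc_antichain a b : Xc a -> Xc b -> tle a b -> a = b.
Proof. destruct c_stable as [_ [_ [_ [Hanti _]]]]. exact (Hanti a b). Qed.

Lemma cone_root_unique v v' x : Xc v -> Xc v' -> cone v x -> cone v' x -> v = v'.
Proof.
  intros Hv Hv' Hx Hx'. destruct (tle_down_total T_tree Hx Hx') as [E|E].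
  - apply Xc_antichain; assumption.
  - symmetry. apply Xc_antichain; assumption.
Qed.

Lemma cone_exit_not_upX v y z : Xc v -> cone v y -> adj y z -> ~ cone v z -> ~ upX z.
Proof.
  intros Hv Hy Hyz Hz [v' [Hv' Hz']].
  destruct (T_normal (tle_inG_r Hy) (tle_inG_r Hz') Hyz) as [E|E].
  - apply Hz. eapply tle_trans; eassumption.
  - assert (Hv'y : cone v' y) by (eapply tle_trans; eassumption).
    rewrite (cone_root_unique Hv' Hv Hv'y Hy) in Hz'. contradiction.
Qed.

Lemma new_vertex_below_cone v w u : D' w -> ~ D w -> Xc v -> cone v u -> adj w u -> tle w v.
Proof.
  intros Hw HDw Hv Hu Hwu.
  assert (Gw : inG inK w) by (destruct (D'_new_in_H Hw HDw); assumption).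
  destruct (T_normal Gw (tle_inG_r Hu) Hwu) as [E|E].
  - destruct (tle_down_total T_tree E Hu) as [F|F]; [exact F|].
    exfalso. apply HDw, upX_in_D. exists v. split; assumption.
  - exfalso. apply HDw, upX_in_D. exists v. split; [|eapply tle_trans]; eassumption.
Qed.

Lemma upX_fin_deg x : upX x -> fin_deg_in adj D' x -> fin_deg adj inK x.
Proof.
  intros Hx [l Hl]. pose proof Hx as [v [Hv Hvx]].
  destruct (ancestors_finite T_tree (tle_inG_r Hvx)) as [la Hla].
  exists (la ++ l). intros u [Gu Hxu]. apply in_or_app.
  destruct (T_normal (tle_inG_r Hvx) Gu Hxu) as [E|E].
  - right. apply Hl. split; [|exact Hxu].
    apply D_sub_D', upX_in_D. exists v. split; [|eapply tle_trans]; eassumption.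
  - left. apply Hla, E.
Qed.

Definition cone_change (v : V) (b : V -> bool) : Prop :=
  exists F, changes_within adj D' (cone v) c' b F.

Lemma cone_change_refl v : cone_change v c'.
Proof. exists nil. split; [intros x []|intros x _ E; contradiction E; reflexivity]. Qed.

Lemma cone_change_covered v b : cone_change v b -> exists L, covers adj D' c' b L.
Proof.
  intros [F [HF Hd]]. destruct (covers_around_exists adj_sym (Dom := D') F) as [L HL].
  { intros x Hx _. apply HF, Hx. }
  exists L. apply (covers_around_covers c' b HL). intros x Hx E. apply Hd; auto.
Qed.

Definition cover_list (b : V -> bool) : list (V * V) :=
  epsilon (inhabits nil) (covers adj D' c' b).

Definition gain_of (b : V -> bool) : Z := gain adj D' c' b (cover_list b).

Lemma gain_of_spec b L : covers adj D' c' b L -> gain adj D' c' b L = gain_of b.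
Proof.
  intros HL. apply gain_cover_independent; [exact HL|].
  apply (epsilon_spec (inhabits nil) (covers adj D' c' b)). exists L. exact HL.
Qed.

Definition new_edge (v : V) (p : V * V) : Prop :=
  dom_edge adj D' p /\
  ((~ D (fst p) /\ cone v (snd p)) \/ (cone v (fst p) /\ ~ D (snd p))).

(* By (S3) and normality: the new endpoint of a new edge is one of the finitely
   many ancestors of [v]. *)
Lemma new_edges_finite v : Xc v -> finite_set (new_edge v).
Proof.
  intros Hv. destruct c_stable as [_ [_ [_ [_ [_ [_ [_ HS3]]]]]]].
  assert (Hdown : finite_set (fun p : V * V =>
            (tle (fst p) v /\ ~ D (fst p)) /\ (adj (fst p) (snd p) /\ cone v (snd p)))).
  { apply (finite_set_pairs (Q := fun w => tle w v /\ ~ D w) (fun w u => adj w u /\ cone v u)).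
    - eapply finite_set_weaken; [|exact (ancestors_finite T_tree (Xc_inG Hv))].
      intros w [Hw _]. exact Hw.
    - intros w [_ Hw]. exact (HS3 w v Hw Hv). }
  eapply finite_set_weaken; [|apply finite_set_or; [exact Hdown|apply finite_set_swap, Hdown]].
  intros [x y] [[Hx [Hy Hxy]] [[Hn Hu]|[Hu Hn]]]; simpl in *; [left|right]; simpl.
  - refine (conj (conj _ Hn) (conj Hxy Hu)). eapply new_vertex_below_cone; eassumption.
  - refine (conj (conj _ Hn) (conj (adj_sym Hxy) Hu)).
    eapply new_vertex_below_cone; [..|apply adj_sym]; eassumption.
Qed.

Lemma trans_gain_le_new_edge v b p : Xc v -> (forall x, D' x -> b x <> c' x -> cone v x) ->
  (trans_gain adj D' c' b p <= trans_gain adj D c b p + ind (new_edge v p))%Z.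
Proof.
  intros Hv Hb. pose proof (ind_bounds (new_edge v p)) as Hind.
  assert (HbD : forall x, D' x -> b x <> c' x -> D x).
  { intros x Hx E. apply upX_in_D. exists v. split; [exact Hv|apply Hb; assumption]. }
  destruct p as [y z]. unfold trans_gain, dom_edge; simpl.
  destruct (holdsP (D y /\ D z /\ adj y z)) as [[Hy [Hz Hyz]]|HnD].
  - rewrite holds_true by auto. rewrite !c'_extends_c by assumption. lia.
  - destruct (holdsP (D' y /\ D' z /\ adj y z)) as [[Hy [Hz Hyz]]|_]; [|lia].
    pose proof (trans_ind_bounds (b y) (b z)). pose proof (trans_ind_bounds (c' y) (c' z)).
    destruct (classic (b y = c' y)) as [Ey|Ey], (classic (b z = c' z)) as [Ez|Ez].
    + rewrite Ey, Ez. lia.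
    + rewrite ind_true; [lia|]. split; [repeat split; assumption|left; simpl; split].
      * intros HDy. apply HnD. repeat split; auto.
      * apply Hb; assumption.
    + rewrite ind_true; [lia|]. split; [repeat split; assumption|right; simpl; split].
      * apply Hb; assumption.
      * intros HDz. apply HnD. repeat split; auto.
    + exfalso. apply HnD. repeat split; auto.
Qed.

(* The gain over [c'] of a change inside [cone v] is at most its gain over [c] on [D],
   which (S2) makes non-positive, plus the number of new edges at [cone v]. *)
Lemma gain_le_new_edges v b L : Xc v -> cone_change v b -> covers adj D' c' b L ->
  (gain adj D' c' b L <= zsum L (fun p => ind (new_edge v p)))%Z.
Proof.
  intros Hv [F [HF Hd]] HL.
  assert (Hb_cone : forall x, D' x -> b x <> c' x -> cone v x) by (intros; apply HF, Hd; auto).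
  assert (Hc_max : (gain adj D c b L <= 0)%Z).
  { destruct c_stable as [_ [_ [_ [_ [_ [_ [HS2 _]]]]]]].
    apply (proj1 (strongly_max_iff_gain adj adj_sym adj_irr D c upX) HS2 b
             (filter (fun x => holds (D x)) F)).
    - split.
      + intros x Hx. apply filter_In in Hx as [Hx HDx].
        destruct (holdsP (D x)) as [HDx'|]; [|discriminate].
        destruct (HF x Hx) as [Hcone [_ Hfin]].
        split; [exists v; split; assumption|split; [exact HDx'|]].
        eapply finite_set_weaken; [|exact Hfin]. intros u [Hu Hxu]. split; auto.
      + intros x Hx E. apply filter_In. split; [|apply holds_true, Hx].
        apply Hd; [auto|]. rewrite c'_extends_c; assumption.
    - destruct HL as [N HL]. split; [exact N|].
      intros p [H1 [H2 H3]] E. apply HL; [repeat split; auto|].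
      rewrite !c'_extends_c by assumption. exact E. }
  unfold gain in *.
  apply Z.le_trans with (zsum L (fun p => trans_gain adj D c b p + ind (new_edge v p))%Z).
  - apply zsum_le. intros p _. apply trans_gain_le_new_edge; assumption.
  - rewrite zsum_add. lia.
Qed.

Definition no_new_neighbour (v : V) : Prop :=
  forall w u, D' w -> ~ D w -> cone v u -> ~ adj w u.

Definition optimal_change (v : V) (b : V -> bool) : Prop :=
  cone_change v b /\
  (forall b', cone_change v b' -> (gain_of b' <= gain_of b)%Z) /\
  (no_new_neighbour v -> b = c').

Lemma optimal_change_exists v : Xc v -> exists b, optimal_change v b.
Proof.
  intros Hv.
  assert (Hgain_le : forall b, cone_change v b -> exists L, NoDup L /\
            (gain_of b <= zsum L (fun p => ind (new_edge v p)))%Z).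
  { intros b Hb. destruct (cone_change_covered Hb) as [L HL]. exists L.
    split; [exact (proj1 HL)|]. rewrite <- (gain_of_spec HL). exact (gain_le_new_edges Hv Hb HL). }
  destruct (classic (no_new_neighbour v)) as [Hno|Hnew].
  - exists c'. split; [apply cone_change_refl|split; [|reflexivity]].
    intros b Hb. destruct (Hgain_le b Hb) as [L [_ HL]].
    replace (gain_of c') with 0%Z by (symmetry; apply gain_same; reflexivity).
    rewrite zsum_zero in HL; [exact HL|].
    intros p _. apply ind_false. intros [[H1 [H2 H3]] [[Hn Hu]|[Hu Hn]]].
    + exact (Hno _ _ H1 Hn Hu H3).
    + exact (Hno _ _ H2 Hn Hu (adj_sym H3)).
  - destruct (new_edges_finite Hv) as [ev Hev].
    destruct (@Z_bounded_attains_max _ (cone_change v) gain_of (Z.of_nat (length ev)) c'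
                (cone_change_refl v)) as [b [Hb Hopt]].
    + intros b Hb. destruct (Hgain_le b Hb) as [L [NL HL]].
      eapply Z.le_trans; [exact HL|apply zsum_ind_le; assumption].
    + exists b. split; [exact Hb|split; [exact Hopt|intros Hno; contradiction]].
Qed.

Definition best_change (v : V) : V -> bool := epsilon (inhabits c') (optimal_change v).

Lemma best_change_optimal v : Xc v -> optimal_change v (best_change v).
Proof. intros Hv. exact (epsilon_spec _ _ (optimal_change_exists Hv)). Qed.

Definition cone_root (x : V) : V := epsilon (inhabits x) (fun v => Xc v /\ cone v x).

Definition glued_coloring (x : V) : bool :=
  if holds (upX x) then best_change (cone_root x) x else c' x.

Lemma glued_coloring_in_cone v x : Xc v -> cone v x -> glued_coloring x = best_change v x.
Proof.
  intros Hv Hx. unfold glued_coloring. rewrite holds_true by (exists v; split; assumption).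
  destruct (epsilon_spec (inhabits x) (fun v => Xc v /\ cone v x)) as [Hr Hrx];
    [exists v; split; assumption|].
  fold (cone_root x) in Hr, Hrx. rewrite (cone_root_unique Hr Hv Hrx Hx). reflexivity.
Qed.

Lemma glued_coloring_off_upX x : ~ upX x -> glued_coloring x = c' x.
Proof. intros Hx. unfold glued_coloring. rewrite holds_false by exact Hx. reflexivity. Qed.

(* On the edges of [D'], the change [glued_coloring -> d] inside [cone v] looks like the
   change [best_change v -> patch (cone v) d c'], whose gain is bounded by the optimality
   of [best_change v]. *)
Lemma glued_coloring_cone_max v d F L : Xc v ->
  changes_within adj D' (cone v) glued_coloring d F -> covers adj D' glued_coloring d L ->
  (gain adj D' glued_coloring d L <= 0)%Z.
Proof.
  intros Hv [HF Hd] HL.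
  destruct (best_change_optimal Hv) as [[Fb [HFb Hdb]] [Hopt _]].
  set (b := best_change v) in *. set (m := patch (cone v) d c').
  assert (Hb_in : forall x, cone v x -> glued_coloring x = b x)
    by (intros; apply glued_coloring_in_cone; assumption).
  assert (Hb_out : forall x, D' x -> ~ cone v x -> b x = c' x).
  { intros x Hx Hcv. apply NNPP. intros E. apply Hcv, HFb, Hdb; assumption. }
  assert (Hd_out : forall x, D' x -> ~ cone v x -> glued_coloring x = d x).
  { intros x Hx Hcv. apply NNPP. intros E. apply Hcv, HF, Hd; [assumption|congruence]. }
  destruct (covers_around_exists adj_sym (Dom := D') (F ++ Fb)) as [L' HL'].
  { intros x Hx _. apply in_app_or in Hx as [Hx|Hx]; [apply HF|apply HFb]; exact Hx. }
  assert (Hm_changes : forall x, D' x -> m x <> c' x -> In x (F ++ Fb)).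
  { intros x Hx E. apply patch_changed in E as [Hcv E]. apply in_or_app.
    destruct (classic (d x = glued_coloring x)) as [E'|E'].
    - right. apply Hdb; [assumption|]. rewrite <- (Hb_in x Hcv), <- E'. exact E.
    - left. apply Hd; assumption. }
  assert (Hm_opt : (gain_of m <= gain_of b)%Z).
  { apply Hopt. exists (F ++ Fb). split; [|exact Hm_changes].
    intros x Hx. apply in_app_or in Hx as [Hx|Hx]; [apply HF|apply HFb]; exact Hx. }
  assert (Hgain_shift : gain adj D' glued_coloring d L' = gain adj D' b m L').
  { apply zsum_ext. intros p _. apply (trans_gain_transfer adj adj_sym D' (cone v)).
    - intros x Hx Hcv. unfold m. rewrite patch_in by exact Hcv. split; [apply Hb_in|]; auto.
    - intros x Hx Hcv. unfold m. rewrite patch_out by exact Hcv. split; auto.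
    - intros y z Hy Hz Hyz Hcy Hcz. right.
      rewrite glued_coloring_off_upX, Hb_out; [reflexivity|assumption..|].
      exact (cone_exit_not_upX Hv Hcy Hyz Hcz). }
  rewrite (gain_cover_independent HL (covers_around_covers _ _ HL'
             (fun x Hx E => in_or_app _ _ _ (or_introl (Hd x Hx (not_eq_sym E)))))).
  rewrite Hgain_shift.
  pose proof (gain_trans adj D' c' b m L') as Htrans.
  rewrite (gain_of_spec (covers_around_covers c' m HL'
             (fun x Hx E => Hm_changes x Hx (not_eq_sym E)))) in Htrans.
  rewrite (gain_of_spec (covers_around_covers c' b HL'
             (fun x Hx E => in_or_app _ _ _ (or_intror (Hdb x Hx (not_eq_sym E)))))) in Htrans.
  lia.
Qed.

(* No edge leaves a cone towards a vertex of [upX], so a change confined to [upX] splits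
   into its part inside [cone v] and its part outside. *)
Lemma glued_coloring_gain_split v d L : Xc v ->
  (forall z, D' z -> d z <> glued_coloring z -> upX z) ->
  gain adj D' glued_coloring d L =
  (gain adj D' glued_coloring (patch (cone v) d glued_coloring) L +
   gain adj D' glued_coloring (patch (cone v) glued_coloring d) L)%Z.
Proof.
  intros Hv Hd.
  set (dA := patch (cone v) d glued_coloring). set (dB := patch (cone v) glued_coloring d).
  assert (Hshift : gain adj D' dA d L = gain adj D' glued_coloring dB L).
  { apply zsum_ext. intros p _.
    apply (trans_gain_transfer adj adj_sym D' (fun x => ~ cone v x)).
    - intros x Hx Hcx. unfold dA, dB. rewrite !patch_out by exact Hcx. split; reflexivity.
    - intros x Hx Hcx. apply NNPP in Hcx. unfold dA, dB. rewrite !patch_in by exact Hcx.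
      split; reflexivity.
    - intros y z Hy Hz Hyz Hcy Hcz. apply NNPP in Hcz. left. unfold dA.
      rewrite patch_out by exact Hcy. apply NNPP. intros E.
      exact (cone_exit_not_upX Hv Hcz (adj_sym Hyz) Hcy (Hd y Hy (not_eq_sym E))). }
  rewrite (gain_trans adj D' glued_coloring dA d L), Hshift. reflexivity.
Qed.

Lemma glued_coloring_gain_nonpos n : forall d F L, length F <= n ->
  changes_within adj D' upX glued_coloring d F -> covers adj D' glued_coloring d L ->
  (gain adj D' glued_coloring d L <= 0)%Z.
Proof.
  induction n as [|n IH]; intros d [|x0 F] L Hlen [HF Hd] HL;
    [| simpl in Hlen; lia | |].
  1, 2: rewrite gain_same; [lia|]; intros x Hx;
        apply NNPP; intros E; exact (Hd x Hx E).
  destruct (HF x0 (or_introl eq_refl)) as [[v [Hv Hx0]] _].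
  rewrite (glued_coloring_gain_split d L Hv) by (intros z Hz E; apply HF, Hd; assumption).
  assert (HA : (gain adj D' glued_coloring (patch (cone v) d glued_coloring) L <= 0)%Z).
  { apply (glued_coloring_cone_max (F := filter (fun x => holds (cone v x)) (x0 :: F)) Hv).
    - split.
      + intros x Hx. apply filter_In in Hx as [Hx Hcx].
        destruct (holdsP (cone v x)) as [Hcx'|]; [|discriminate].
        destruct (HF x Hx) as [_ Hx']. split; assumption.
      + intros x Hx E. apply patch_changed in E as [Hcx E].
        apply filter_In. split; [apply Hd; assumption|apply holds_true, Hcx].
    - apply (covers_weaken _ _ HL). intros x _ E.
      apply not_eq_sym, patch_changed in E as [_ E]. exact (not_eq_sym E). }
  assert (HB : (gain adj D' glued_coloring (patch (cone v) glued_coloring d) L <= 0)%Z).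
  { apply (IH _ (filter (fun x => holds (~ cone v x)) F)).
    - pose proof (filter_length_le (fun x => holds (~ cone v x)) F). simpl in Hlen. lia.
    - split.
      + intros x Hx. apply filter_In in Hx as [Hx _]. apply HF. right. exact Hx.
      + intros x Hx E. apply patch_co_changed in E as [Hcx E].
        apply filter_In. split; [|apply holds_true, Hcx].
        destruct (Hd x Hx E) as [<-|Hin]; [contradiction|exact Hin].
    - apply (covers_weaken _ _ HL). intros x _ E.
      apply not_eq_sym, patch_co_changed in E as [_ E]. exact (not_eq_sym E). }
  lia.
Qed.

Lemma glued_coloring_strongly_max : strongly_max adj D' glued_coloring upX.
Proof.
  apply (strongly_max_iff_gain adj adj_sym adj_irr). intros d F L HF HL.
  exact (glued_coloring_gain_nonpos (le_n (length F)) HF HL).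
Qed.

Lemma glued_coloring_changes_in_upX x : glued_coloring x <> c' x -> upX x.
Proof. intros E. apply NNPP. intros Hx. exact (E (glued_coloring_off_upX Hx)). Qed.

Lemma glued_coloring_cone_changes v : Xc v ->
  finite_set (fun x => cone v x /\ glued_coloring x <> c' x) /\
  (forall x, cone v x -> glued_coloring x <> c' x -> fin_deg adj inK x).
Proof.
  intros Hv. destruct (best_change_optimal Hv) as [[F [HF Hd]] _].
  assert (HinF : forall x, cone v x -> glued_coloring x <> c' x -> In x F).
  { intros x Hx E. rewrite (glued_coloring_in_cone Hv Hx) in E. apply Hd; [|exact E].
    apply D_sub_D', upX_in_D. exists v. split; assumption. }
  split.
  - exists F. intros x [Hx E]. exact (HinF x Hx E).
  - intros x Hx E. apply upX_fin_deg; [exists v; split; assumption|].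
    apply HF, HinF; assumption.
Qed.

Lemma glued_coloring_untouched v : Xc v -> no_new_neighbour v ->
  forall x, cone v x -> glued_coloring x = c x.
Proof.
  intros Hv Hno x Hx. destruct (best_change_optimal Hv) as [_ [_ Hbest]].
  rewrite (glued_coloring_in_cone Hv Hx), (Hbest Hno).
  apply c'_extends_c, upX_in_D. exists v. split; assumption.
Qed.

End GluedColoring.

Theorem lemma3p5 (V : Type) (adj : V -> V -> Prop) (inK : V -> Prop)
  (par : V -> V) (r : V)
  (adj_sym : forall u v, adj u v -> adj v u)
  (adj_irr : forall v, ~ adj v v)
  (K_fin : finite_set inK)
  (G_count : countable {v : V | inG inK v})
  (G_conn : connectedG adj inK)
  (G_noalt : forall f, ~ alternating_ray adj inK f)
  (T_tree : rooted_spanning_tree adj inK par r)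
  (T_normal : normal_tree adj inK par)
  (D : V -> Prop) (c : V -> bool) (Hc Xc : V -> Prop)
  (c_stable : stable_wit adj inK par D c Hc Xc)
  (D' : V -> Prop) (c' : V -> bool)
  (DD' : forall x, D x -> D' x)
  (D'H : forall x, D' x -> ~ D x -> Hset adj inK par x)
  (c'ext : forall x, D x -> c' x = c x) :
  exists ct : V -> bool,
    strongly_max adj D' ct (up inK par Xc) /\
    (forall x, D' x -> ct x <> c' x -> up inK par Xc x) /\
    (forall v, Xc v ->
       finite_set (fun x => up1 inK par v x /\ ct x <> c' x) /\
       (forall x, up1 inK par v x -> ct x <> c' x -> fin_deg adj inK x)) /\
    (forall v, Xc v ->
       (forall w u, D' w -> ~ D w -> up1 inK par v u -> ~ adj w u) ->
       forall x, up1 inK par v x -> ct x = c x).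
Proof.
  exists (glued_coloring adj inK par D Xc D' c').
  split; [|split; [|split]].
  - eapply glued_coloring_strongly_max; eassumption.
  - intros x _. apply glued_coloring_changes_in_upX.
  - intros v Hv. eapply glued_coloring_cone_changes; eassumption.
  - intros v Hv Hno. eapply glued_coloring_untouched; eassumption.
Qed.
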